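(* Let $G=(V,E)$ be a loopless multigraph with $n$ vertices, $m$ edges and maximum degree $\Delta$. Then there are $\Delta$ spanning forests $F_1,\dots,F_\Delta$ on vertex set $V$, each having either $\lceil m/\Delta\rceil$ or $\lfloor m/\Delta\rfloor$ edges, whose edge sets partition $E$.
   Context: Forests may have no edges; a forest in a multigraph contains no cycles (in particular no two parallel edges). *)

From mathcomp Require Import all_boot.
Set Implicit Arguments. Unset Strict Implicit. Unset Printing Implicit Defensive.

(* A multigraph: finite vertex type V, finite edge type E, and an endpoint map
   ends : E -> V * V (orientation irrelevant). Parallel edges are distinct
   elements of E with the same endpoints. *)

Definition loopless (V E : finType) (ends : E -> V * V) : Prop :=
  forall e : E, (ends e).1 != (ends e).2.

Definition joins (V E : finType) (ends : E -> V * V) (e : E) (u w : V) : bool :=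
  ((ends e).1 == u) && ((ends e).2 == w) || ((ends e).1 == w) && ((ends e).2 == u).

Definition deg (V E : finType) (ends : E -> V * V) (v : V) : nat :=
  #|[set e : E | ((ends e).1 == v) || ((ends e).2 == v)]|.

Definition maxdeg (V E : finType) (ends : E -> V * V) : nat :=
  \max_(v : V) deg ends v.

(* A cycle: distinct edges e_0..e_{k-1} (k >= 1) and distinct vertices
   v_0..v_{k-1} with e_i joining v_i and v_{i+1 mod k}. For k = 2 this is a
   pair of parallel edges. *)
Definition is_cycle (V E : finType) (ends : E -> V * V) (es : seq E) (vs : seq V) : bool :=
  [&& 0 < size es, size vs == size es, uniq es, uniq vs &
      all (fun p => joins ends p.1 p.2.1 p.2.2) (zip es (zip vs (rot 1 vs)))].

Definition is_forest (V E : finType) (ends : E -> V * V) (F : {set E}) : Prop :=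
  ~ exists (es : seq E) (vs : seq V), is_cycle ends es vs /\ all (fun e => e \in F) es.

From mathcomp Require Import all_boot zify.
Set Implicit Arguments. Unset Strict Implicit. Unset Printing Implicit Defensive.

(* Proof idea (a round-robin colouring of a well-chosen edge order).
   Rank the vertices injectively and give each edge the key "rank of its
   higher endpoint".  All edges with a given key r share the vertex of rank r,
   so at most Delta = maxdeg edges carry the same key.  List the edges sorted
   by key and give the edge in position t the colour t mod Delta.  Equal keys
   occupy a window of fewer than Delta consecutive positions, hence distinct
   edges with equal keys get distinct colours.  On the other hand, in every
   cycle the vertex of highest rank is met by two distinct cycle edges, both
   of whose keys equal its rank; so every colour class is a forest. *)

Lemma map_index_uniq (T : eqType) (s : seq T) :
  uniq s -> map (index^~ s) s = iota 0 (size s).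
Proof.
case: s => [|x s'] // s_uniq; set s := x :: s' in s_uniq *.
rewrite -[X in map _ X](mkseq_nth x) /mkseq -map_comp -[RHS]map_id.
by apply/eq_in_map => t; rewrite mem_iota add0n => /andP[_ lt_t]; exact: index_uniq.
Qed.

Lemma count_mod_iota_small d i m : m <= d ->
  count (fun t => t %% d == i) (iota 0 m) = (i < m).
Proof.
elim: m => [|m IHm] le_md //.
rewrite -addn1 iotaD count_cat IHm ?(ltnW le_md) //= add0n modn_small // addn0.
by case: (ltngtP i m) => cmp_im; case: (m =P i) => eq_mi; lia.
Qed.

Lemma count_mod_iota d i m : 0 < d -> i < d ->
  count (fun t => t %% d == i) (iota 0 m) = m %/ d + (i < m %% d).
Proof.
move=> d_gt0 lt_id; elim/ltn_ind: m => m IH.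
case: (ltnP m d) => [lt_md|le_dm].
  by rewrite divn_small // modn_small // add0n count_mod_iota_small // ltnW.
rewrite -(subnKC le_dm) iotaD count_cat.
have -> : iota (0 + d) (m - d) = map (addn d) (iota 0 (m - d)) by rewrite -iotaDl addn0.
rewrite count_map (@eq_count _ _ (fun t => t %% d == i)) => [|t /=]; last by rewrite addnC modnDr.
rewrite (IH (m - d)); last by lia.
rewrite count_mod_iota_small // lt_id divnDl ?dvdnn // divnn d_gt0 modnDl; lia.
Qed.

Lemma ceil_divn d m : 0 < d -> 0 < m %% d -> (m + d - 1) %/ d = m %/ d + 1.
Proof.
move=> d_gt0 r_gt0.
have ->: m + d - 1 = m %/ d * d + (d + (m %% d - 1)) by rewrite {1}(divn_eq m d); lia.
rewrite divnMDl // divnDl ?dvdnn // divnn d_gt0 (@divn_small (m %% d - 1)); first lia.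
by have := ltn_pmod m d_gt0; lia.
Qed.

Section SortedResidues.
Variables (T : eqType) (key : T -> nat) (d : nat) (s : seq T).
Hypotheses (s_uniq : uniq s) (s_sorted : sorted (relpre key leq) s).
Hypothesis class_small : forall x, count (fun y => key y == key x) s <= d.

Lemma key_nth_mono x0 i j : i <= j -> j < size s ->
  key (nth x0 s i) <= key (nth x0 s j).
Proof.
move=> le_ij lt_js; apply: (sorted_leq_nth _ _ x0 s_sorted) => //=.
- by move=> a b c /= /leq_trans; apply.
- by move=> a /=.
- by rewrite inE (leq_ltn_trans le_ij).
Qed.

(* Two positions with equal keys enclose a block of equal keys, which is a
   subsequence of s and hence has fewer than d + 1 entries. *)
Lemma same_key_window x0 i j : i < j -> j < size s ->
  key (nth x0 s i) = key (nth x0 s j) -> j - i < d.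
Proof.
move=> lt_ij lt_js eq_key.
set slice := drop i (take j.+1 s).
have size_slice : size slice = j.+1 - i by rewrite size_drop size_takel.
have slice_key : all (fun y => key y == key (nth x0 s i)) slice.
  apply/(all_nthP x0) => t; rewrite size_slice => lt_t.
  rewrite nth_drop nth_take; last by lia.
  by rewrite eqn_leq {1}eq_key !key_nth_mono //; lia.
have sub_slice : subseq slice s.
  exact: subseq_trans (drop_subseq _ _) (take_subseq _ _).
have := leq_trans (leq_count_subseq _ sub_slice) (class_small (nth x0 s i)).
by rewrite all_count in slice_key; rewrite (eqP slice_key) size_slice; lia.
Qed.

(* Positions closer than d cannot be congruent mod d. *)
Lemma same_key_residues x y : x \in s -> y \in s -> x != y ->
  key x = key y -> index x s %% d != index y s %% d.
Proof.
wlog lt_xy : x y / index x s < index y s => [hwlog|] xs ys neq_xy eq_key.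
  case: (ltngtP (index x s) (index y s)) => [lt|lt|eq].
  - exact: hwlog.
  - by rewrite eq_sym hwlog // eq_sym.
  - by move: neq_xy; rewrite -(nth_index x xs) eq nth_index ?eqxx.
have lt_ys : index y s < size s by rewrite index_mem.
have := same_key_window (x0 := x) lt_xy lt_ys.
rewrite !nth_index // => /(_ eq_key) small_gap.
apply/negP; rewrite eq_sym eqn_mod_dvd ?(ltnW lt_xy) // => /dvdn_leq.
by rewrite subn_gt0 lt_xy => /(_ isT); lia.
Qed.

End SortedResidues.

Section KeyColoring.
Variables (V E : finType) (ends : E -> V * V) (rank : V -> nat).

Definition edge_key (e : E) : nat := maxn (rank (ends e).1) (rank (ends e).2).

Lemma edge_key_joins e u w : joins ends e u w -> edge_key e = maxn (rank u) (rank w).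
Proof.
by case/orP=> /andP[/eqP eu /eqP ew]; rewrite /edge_key eu ew // maxnC.
Qed.

Lemma joins_loop e u : loopless ends -> ~~ joins ends e u u.
Proof.
move=> /(_ e) ends_neq; apply/negP; rewrite /joins orbb => /andP[/eqP e1 /eqP e2].
by rewrite e1 e2 eqxx in ends_neq.
Qed.

Lemma cycle_edge_joins e0 v0 es vs t : is_cycle ends es vs -> t < size es ->
  joins ends (nth e0 es t) (nth v0 vs t) (nth v0 (rot 1 vs) t).
Proof.
case/and5P=> _ /eqP size_vs _ _ /(all_nthP (e0, (v0, v0))) cycle_joins lt_t.
have := cycle_joins t; rewrite !size_zip size_rot size_vs !minnn => /(_ lt_t).
by rewrite !nth_zip ?size_zip ?size_rot ?size_vs ?minnn.
Qed.

(* Every cycle contains two distinct edges with the same key: the two cycle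
   edges at the vertex x of highest rank, namely the one leaving x (position
   index x vs) and the one entering x (position index x (rot 1 vs)); these
   positions differ, as otherwise that edge would be a loop at x. *)
Lemma cycle_equal_keys es vs : loopless ends -> is_cycle ends es vs ->
  exists e f, [/\ e \in es, f \in es, e != f & edge_key e = edge_key f].
Proof.
move=> loopfree cyc; have cyc' := cyc.
case/and5P: cyc' => es_gt0 /eqP size_vs es_uniq _ _.
have [x x_vs x_max] : exists2 x, x \in vs & forall v, v \in vs -> rank v <= rank x.
  have [|x x_vs eq_max] := @eq_bigmax_cond _ (mem vs) rank.
    apply/card_gt0P; move: es_gt0; rewrite -size_vs.
    by case: (vs) => // v ? _; exists v; exact: mem_head.
  by exists x => // v v_vs; rewrite -eq_max (leq_bigmax_cond _ v_vs).
have e0 : E by case: (es) es_gt0 => // e.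
have x_rot : x \in rot 1 vs by rewrite mem_rot.
have lt_j : index x vs < size es by rewrite -size_vs index_mem.
have lt_j' : index x (rot 1 vs) < size es by rewrite -size_vs -(size_rot 1) index_mem.
have key_j : edge_key (nth e0 es (index x vs)) = rank x.
  have := cycle_edge_joins e0 x cyc lt_j; rewrite nth_index // => /edge_key_joins ->.
  by apply/maxn_idPl/x_max; rewrite -(mem_rot 1) mem_nth // size_rot size_vs.
have key_j' : edge_key (nth e0 es (index x (rot 1 vs))) = rank x.
  have := cycle_edge_joins e0 x cyc lt_j'; rewrite nth_index // => /edge_key_joins ->.
  by apply/maxn_idPr/x_max; rewrite mem_nth // size_vs.
have neq_jj' : index x vs != index x (rot 1 vs).
  apply/negP => /eqP eq_jj'; have := cycle_edge_joins e0 x cyc lt_j.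
  by rewrite (nth_index _ x_vs) eq_jj' (nth_index _ x_rot); apply/negP/joins_loop.
exists (nth e0 es (index x vs)), (nth e0 es (index x (rot 1 vs))).
by rewrite !mem_nth // nth_uniq // key_j key_j'.
Qed.

Lemma forest_of_key_coloring (c : E -> nat) : loopless ends ->
  (forall e f, e != f -> edge_key e = edge_key f -> c e != c f) ->
  forall i, is_forest ends [set e | c e == i].
Proof.
move=> loopfree c_proper i [es [vs [cyc /allP es_in]]].
have [e [f [e_es f_es neq_ef eq_key]]] := cycle_equal_keys loopfree cyc.
have := es_in e e_es; have := es_in f f_es; rewrite !inE => /eqP cf /eqP ce.
by have := c_proper e f neq_ef eq_key; rewrite ce cf eqxx.
Qed.

Lemma edge_key_endpoint e :
  exists2 v, edge_key e = rank v & ((ends e).1 == v) || ((ends e).2 == v).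
Proof.
rewrite /edge_key; case: (leqP (rank (ends e).1) (rank (ends e).2)) => [le|lt].
  by exists (ends e).2; rewrite ?eqxx ?orbT // (maxn_idPr le).
by exists (ends e).1; rewrite ?eqxx // (maxn_idPl (ltnW lt)).
Qed.

Lemma deg_le_maxdeg v : deg ends v <= maxdeg ends.
Proof. exact: leq_bigmax. Qed.

(* For an injective ranking, the edges of a given key r all meet the vertex of
   rank r, so there are at most Delta of them. *)
Lemma edge_key_class_small : injective rank ->
  forall e, #|[set f | edge_key f == edge_key e]| <= maxdeg ends.
Proof.
move=> rank_inj e; have [v key_e ends_v] := edge_key_endpoint e.
apply: leq_trans (deg_le_maxdeg v); apply/subset_leq_card/subsetP => f.
have [w key_f ends_w] := edge_key_endpoint f.
by rewrite !inE key_f key_e => /eqP/rank_inj <-.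
Qed.

End KeyColoring.

Lemma card_set_count (T : finType) (P : pred T) : #|[set x | P x]| = count P (enum T).
Proof. by rewrite enumT cardsE cardE /enum_mem size_filter. Qed.

Section RoundRobinColoring.
Variables (V E : finType) (ends : E -> V * V).

Definition vertex_rank (v : V) : nat := enum_rank v.

Lemma vertex_rank_inj : injective vertex_rank.
Proof. by move=> u w /ord_inj/enum_rank_inj. Qed.

Local Notation key := (edge_key ends vertex_rank).

Definition edge_order : seq E := sort (relpre key leq) (enum E).

Definition edge_color (e : E) : nat := index e edge_order %% maxdeg ends.

Lemma edge_order_perm : perm_eq edge_order (enum E).
Proof. by rewrite perm_sort perm_refl. Qed.

Lemma edge_color_proper e f : e != f -> key e = key f -> edge_color e != edge_color f.
Proof.
have mem_order x : x \in edge_order by rewrite (perm_mem edge_order_perm) mem_enum.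
apply: same_key_residues; rewrite ?mem_order //.
- by rewrite (perm_uniq edge_order_perm) enum_uniq.
- by apply: sort_sorted => x y; apply: leq_total.
- move=> x; rewrite (permP edge_order_perm) -card_set_count.
  exact: edge_key_class_small vertex_rank_inj x.
Qed.

Lemma edge_color_class_card i : i < maxdeg ends ->
  #|[set e | edge_color e == i]| = #|E| %/ maxdeg ends + (i < #|E| %% maxdeg ends).
Proof.
move=> lt_i; have d_gt0 : 0 < maxdeg ends by apply: leq_ltn_trans lt_i.
rewrite card_set_count -(permP edge_order_perm).
have order_uniq : uniq edge_order by rewrite (perm_uniq edge_order_perm) enum_uniq.
rewrite -[count _ _](count_map (index^~ edge_order) (fun t => t %% maxdeg ends == i)).
by rewrite map_index_uniq // (perm_size edge_order_perm) -cardT count_mod_iota.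
Qed.

Lemma maxdeg_gt0 (e : E) : 0 < maxdeg ends.
Proof.
apply: leq_trans (deg_le_maxdeg ends (ends e).1).
by rewrite /deg card_gt0; apply/set0Pn; exists e; rewrite inE eqxx.
Qed.

End RoundRobinColoring.

Unset Implicit Arguments.

Theorem lemma3p3 (V E : finType) (ends : E -> V * V) :
  loopless ends ->
  exists F : 'I_(maxdeg ends) -> {set E},
    (forall i, is_forest ends (F i)) /\
    (forall i, #|F i| = #|E| %/ maxdeg ends \/
               #|F i| = (#|E| + maxdeg ends - 1) %/ maxdeg ends) /\
    (forall i j, i != j -> [disjoint F i & F j]) /\
    (forall e : E, exists i, e \in F i).
Proof.
move=> loopfree; exists (fun i : 'I_(maxdeg ends) => [set e | edge_color ends e == i]).
split; [|split; [|split]].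
- by move=> i; apply: forest_of_key_coloring loopfree _ i; apply: edge_color_proper.
- move=> i; rewrite edge_color_class_card //.
  case: (ltnP i (#|E| %% maxdeg ends)) => [lt_r|_]; last by left; rewrite addn0.
  have d_gt0 : 0 < maxdeg ends by apply: leq_ltn_trans (ltn_ord i).
  by right; rewrite ceil_divn // (leq_ltn_trans (leq0n _) lt_r).
- move=> i j neq_ij; apply/pred0P => e /=; rewrite !inE.
  apply/negP => /andP[/eqP ci /eqP cj].
  by move: neq_ij; rewrite -(inj_eq val_inj) /= -ci -cj eqxx.
- move=> e; have lt_color := ltn_pmod (index e (edge_order ends)) (maxdeg_gt0 ends e).
  by exists (Ordinal lt_color); rewrite inE.
Qed.
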